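(* Every finite word accepted by $\widehat{\mathcal{T}_{p/q}}$ (i.e. labelling a path starting at state $0$) is a prefix of a span-word $M_n\ominus\mu_n$ for some $n\in\mathbb{N}$.
   Context: Let $p>q>1$ be coprime integers, $A_p=\{0,\dots,p-1\}$, $A_q=\{0,\dots,q-1\}$ and $B=\{p-(2q-1),\dots,p-1\}$. For $n\in\mathbb{N}$ and $a\in\mathbb{Z}$, let $\tau(n,a)=\frac{np+a}{q}$, defined only when $q$ divides $np+a$. Let $\mathcal{T}_{p/q}$ be the deterministic automaton with state set $\mathbb{N}$, alphabet $A_p$, initial state $0$, and transitions $n\xrightarrow{a}\tau(n,a)$ for $a\in A_p$ with $\tau(n,a)$ defined. The minimal word $\mu_n\in A_q^{\omega}$ (resp. maximal word $M_n\in\{p-q,\dots,p-1\}^{\omega}$) is the unique infinite word over $A_q$ (resp. over $\{p-q,\dots,p-1\}$) labelling a path of $\mathcal{T}_{p/q}$ starting at $n$. The span-word of $n$ is $M_n\ominus\mu_n$, with $\ominus$ letter-wise subtraction. Let $\widehat{\mathcal{T}_{p/q}}$ be the deterministic automaton with state set $\mathbb{N}$, alphabet $B$, initial state $0$, and transitions $n\xrightarrow{a}\tau(n,a)$ for $a\in B$ with $\tau(n,a)$ defined. *)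

From Stdlib Require Import ZArith List.
Open Scope Z_scope.

(* tau(n,a) = (n p + a)/q is defined and equals the state m
   (a natural number) : q divides n p + a and the quotient is m >= 0. *)
Definition tau_step (p q : Z) (n a m : Z) : Prop :=
  0 <= n /\ 0 <= m /\ n * p + a = q * m.

Fixpoint fin_path (p q : Z) (n : Z) (u : list Z) (m : Z) : Prop :=
  match u with
  | nil => n = m
  | a :: u' => exists n', tau_step p q n a n' /\ fin_path p q n' u' m
  end.

Definition inf_path (p q : Z) (n : Z) (w : nat -> Z) : Prop :=
  exists s : nat -> Z, s O = n /\ forall i, tau_step p q (s i) (w i) (s (S i)).

(* mu is the minimal word of n: an infinite word over A_q = {0..q-1}
   labelling a path from n (such a word is unique) *)
Definition is_min_word (p q n : Z) (mu : nat -> Z) : Prop :=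
  (forall i, 0 <= mu i <= q - 1) /\ inf_path p q n mu.

(* M is the maximal word of n: an infinite word over {p-q..p-1}
   labelling a path from n (such a word is unique) *)
Definition is_max_word (p q n : Z) (M : nat -> Z) : Prop :=
  (forall i, p - q <= M i <= p - 1) /\ inf_path p q n M.

Definition in_B (p q a : Z) : Prop := p - (2 * q - 1) <= a <= p - 1.

Definition accepted_hat (p q : Z) (u : list Z) : Prop :=
  (forall a, In a u -> in_B p q a) /\ exists m, fin_path p q 0 u m.

Definition prefix_of_diff (u : list Z) (M mu : nat -> Z) : Prop :=
  forall i, (i < length u)%nat -> nth i u 0 = M i - mu i.

(* Call a state n good for (e, u) when u is a prefix of M ⊖ mu, where mu is
   the minimal word of n and M the maximal word of n + e.  By induction on u
   (read along a path e → e' → ... of the automaton), the good states contain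
   an arithmetic progression t + j Q with Q coprime to p.  For the step, a
   letter a of B splits as a = M0 - mu0 with mu0 ∈ A_q and M0 ∈ {p-q,...,p-1};
   a state n whose minimal-word transition with mu0 lands in the progression
   for u is good for a :: u, since e p + a = q e' makes the maximal-word
   transition from n + e with M0 land at the shifted state.  Such n again form
   a progression because q Q is invertible modulo p.  With e = 0 this is the
   theorem. *)
From Stdlib Require Import ZArith List Lia Znumtheory.
Open Scope Z_scope.

Lemma inf_path_cons p q n a n' w :
  tau_step p q n a n' -> inf_path p q n' w ->
  inf_path p q n (fun i => match i with O => a | S i => w i end).
Proof.
  intros Hstep [s [Hs0 Hs]].
  exists (fun i => match i with O => n | S i => s i end); split; [reflexivity|].
  intros [|i]; [subst; exact Hstep | apply Hs].
Qed.

Lemma inf_path_of_letter_choice p q (hq : 0 < q) (c : Z -> Z) lo hi :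
  (forall m, 0 <= m -> 0 <= m * p + c m /\ (q | m * p + c m) /\ lo <= c m <= hi) ->
  forall n, 0 <= n -> exists w, (forall i, lo <= w i <= hi) /\ inf_path p q n w.
Proof.
  intros Hc n Hn.
  set (f := fun m => (m * p + c m) / q).
  assert (Hf : forall m, 0 <= m -> 0 <= f m /\ m * p + c m = q * f m).
  { intros m Hm; destruct (Hc m Hm) as [Hpos [[k Hk] _]]; unfold f.
    rewrite Hk, Z.div_mul by lia; nia. }
  set (s := fun i => Nat.iter i f n).
  assert (Hs : forall i, 0 <= s i).
  { induction i; [exact Hn | apply (Hf _ IHi)]. }
  exists (fun i => c (s i)); split.
  - intro i; apply (Hc _ (Hs i)).
  - exists s; split; [reflexivity|].
    intro i; repeat split; [apply Hs | apply (Hs (S i)) | apply (Hf _ (Hs i))].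
Qed.

Lemma min_word_exists p q n : 0 < q -> 0 < p -> 0 <= n ->
  exists mu, is_min_word p q n mu.
Proof.
  intros hq hp Hn.
  apply (inf_path_of_letter_choice p q hq (fun m => (- (m * p)) mod q) 0 (q - 1));
    [|exact Hn].
  intros m Hm; pose proof (Z.mod_pos_bound (- (m * p)) q hq).
  split; [nia|]; split; [|lia].
  apply Z.mod_divide; [lia|].
  rewrite Zplus_mod_idemp_r; replace (m * p + - (m * p)) with 0 by ring; reflexivity.
Qed.

Lemma max_word_exists p q n : 0 < q -> q < p -> 0 <= n ->
  exists M, is_max_word p q n M.
Proof.
  intros hq hpq Hn.
  apply (inf_path_of_letter_choice p q hq
           (fun m => p - q + (q - p - m * p) mod q) (p - q) (p - 1)); [|exact Hn].
  intros m Hm; pose proof (Z.mod_pos_bound (q - p - m * p) q hq).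
  split; [nia|]; split; [|lia].
  apply Z.mod_divide; [lia|].
  replace (m * p + (p - q + (q - p - m * p) mod q))
    with ((m * p + p - q) + (q - p - m * p) mod q) by ring.
  rewrite Zplus_mod_idemp_r; replace (m * p + p - q + (q - p - m * p)) with 0 by ring.
  reflexivity.
Qed.

Lemma coprime_mul_hits_residue c p r : 0 < p -> Z.gcd c p = 1 ->
  exists k, 0 < k /\ (p | c * k + r).
Proof.
  intros hp hcop; destruct (Z.gcd_bezout c p 1 hcop) as [x [y Hxy]].
  exists ((- r * x) mod p + p); split.
  - pose proof (Z.mod_pos_bound (- r * x) p hp); lia.
  - exists (r * y + c * (1 - (- r * x) / p)).
    rewrite (Z.mod_eq (- r * x) p) by lia.
    generalize ((- r * x) / p); intro d.
    transitivity (c * (- r * x - p * d + p) + r * (x * c + y * p)); [rewrite Hxy|]; ring.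
Qed.

Lemma progression_preimage p q Q t' r : 0 < p -> 0 < q -> 0 < Q ->
  Z.gcd (q * Q) p = 1 -> 0 <= t' -> 0 <= r < q ->
  exists t j0, 0 <= t /\ 0 <= j0 /\ p * t + r = q * (t' + j0 * Q).
Proof.
  intros hp hq hQ hcop ht' hr.
  destruct (coprime_mul_hits_residue (q * Q) p (q * t' - r) hp hcop)
    as [k [Hk [t Ht]]].
  assert (q <= q * Q * k) by (apply Z.le_trans with (q * Q); nia).
  exists t, k; repeat split; nia.
Qed.

Definition span_prefix_from (p q n e : Z) (u : list Z) : Prop :=
  exists mu M, is_min_word p q n mu /\ is_max_word p q (n + e) M /\
               prefix_of_diff u M mu.

Lemma span_prefix_from_nil p q n e : 0 < q -> q < p -> 0 <= n -> 0 <= e ->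
  span_prefix_from p q n e nil.
Proof.
  intros hq hpq Hn He.
  destruct (min_word_exists p q n) as [mu Hmu]; try lia.
  destruct (max_word_exists p q (n + e)) as [M HM]; try lia.
  exists mu, M; repeat split; try apply Hmu; try apply HM.
  intros i Hi; simpl in Hi; lia.
Qed.

Lemma in_B_split p q a : in_B p q a ->
  0 <= Z.max 0 (p - q - a) <= q - 1 /\ p - q <= Z.max 0 (p - q - a) + a <= p - 1.
Proof. unfold in_B; lia. Qed.

Lemma span_prefix_from_cons p q n n1 e e' a u :
  0 < q -> 0 <= n -> in_B p q a -> tau_step p q e a e' ->
  n * p + Z.max 0 (p - q - a) = q * n1 -> span_prefix_from p q n1 e' u ->
  span_prefix_from p q n e (a :: u).
Proof.
  intros hq Hn HB [He [He' Hstep]] Hn1 [mu [M [[Hmu Hpmu] [[HM HpM] Hpre]]]].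
  pose proof (in_B_split p q a HB) as Hsplit.
  set (mu0 := Z.max 0 (p - q - a)) in *.
  assert (Hn1pos : 0 <= n1) by nia.
  exists (fun i => match i with O => mu0 | S i => mu i end),
         (fun i => match i with O => mu0 + a | S i => M i end).
  split; [|split].
  - split; [intros [|i]; [lia | apply Hmu] |].
    apply inf_path_cons with n1; [repeat split; lia | exact Hpmu].
  - split; [intros [|i]; [lia | apply HM] |].
    apply inf_path_cons with (n1 + e'); [repeat split; nia | exact HpM].
  - intros [|i] Hi; simpl; [lia | apply Hpre; simpl in Hi; lia].
Qed.

Lemma span_prefix_progression p q (hq : 0 < q) (hpq : q < p)
  (hcop : Z.gcd p q = 1) (u : list Z) :
  forall e m, 0 <= e -> (forall a, In a u -> in_B p q a) -> fin_path p q e u m ->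
  exists t Q, 0 <= t /\ 0 < Q /\ Z.gcd Q p = 1 /\
    forall j, 0 <= j -> span_prefix_from p q (t + j * Q) e u.
Proof.
  induction u as [|a u IH]; intros e m He HB Hpath.
  - exists 0, 1; repeat split; try lia; [apply Z.gcd_1_l|].
    intros j Hj; apply span_prefix_from_nil; lia.
  - destruct Hpath as [e' [Hstep Hpath]].
    assert (HBa : in_B p q a) by (apply HB; left; reflexivity).
    destruct (IH e' m (proj1 (proj2 Hstep)) (fun x Hx => HB x (or_intror Hx)) Hpath)
      as [t' [Q [Ht' [HQ [HgQ Hprog]]]]].
    assert (HgqQ : Z.gcd (q * Q) p = 1).
    { apply Zgcd_1_rel_prime, rel_prime_sym, rel_prime_mult;
        apply Zgcd_1_rel_prime; [exact hcop | rewrite Z.gcd_comm; exact HgQ]. }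
    pose proof (in_B_split p q a HBa) as Hsplit.
    destruct (progression_preimage p q Q t' (Z.max 0 (p - q - a)))
      as [t [j0 [Ht [Hj0 Hpre]]]]; try lia.
    exists t, (q * Q); split; [lia | split; [nia | split; [exact HgqQ |]]].
    intros j Hj.
    apply span_prefix_from_cons with (t' + (j0 + j * p) * Q) e';
      [lia | nia | exact HBa | exact Hstep | nia | apply Hprog; nia].
Qed.

Theorem mainTheorem8 (p q : Z) (hq : 1 < q) (hpq : q < p) (hcop : Z.gcd p q = 1)
  (u : list Z) :
  accepted_hat p q u ->
  exists n : Z, 0 <= n /\
    exists mu M : nat -> Z,
      is_min_word p q n mu /\ is_max_word p q n M /\ prefix_of_diff u M mu.
Proof.
  intros [HB [m Hpath]].
  destruct (span_prefix_progression p q ltac:(lia) hpq hcop u 0 m ltac:(lia) HB Hpath)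
    as [t [Q [Ht [_ [_ Hprog]]]]].
  destruct (Hprog 0 ltac:(lia)) as [mu [M [Hmu [HM Hpre]]]].
  rewrite Z.mul_0_l, Z.add_0_r in Hmu, HM; rewrite Z.add_0_r in HM.
  exists t; split; [exact Ht|]; exists mu, M; auto.
Qed.
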